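(* Let $H$ be an $n$-Hilbert space, fix $a_2,\dots,a_n\in H$, let $C\in\mathcal{GB}(H_F)$, and let $\{f_i\}_{i=1}^\infty$ be a $C$-controlled frame associated to $(a_2,\dots,a_n)$ for $H$ with $C$-controlled frame operator $S_C$. Suppose $S_C^{-1}$ commutes with $C$. Then $\{S_C^{-1/2}f_i\}_{i=1}^\infty$ is a $C$-controlled Parseval frame associated to $(a_2,\dots,a_n)$ for $H$.
   Context: Let $n\ge 2$ and let $H$ be a complex $n$-Hilbert space with $n$-inner product $\langle\cdot,\cdot\,|\,\cdot,\dots,\cdot\rangle$ and induced $n$-norm $\|x_1,\dots,x_n\|=\langle x_1,x_1|x_2,\dots,x_n\rangle^{1/2}$. Fix $a_2,\dots,a_n\in H$, put $F=\{a_2,\dots,a_n\}$ and let $L_F$ be its linear span. Then $\langle x,y\rangle_F:=\langle x,y|a_2,\dots,a_n\rangle$ is a semi-inner product on $H$ inducing an inner product on $H/L_F$; identifying $H/L_F$ with an algebraic complement $M_F$ of $L_F$ in $H$, $H_F$ denotes the Hilbert space completion of $M_F$; its inner product and norm are written $\langle f,g|a_2,\dots,a_n\rangle$ and $\|f,a_2,\dots,a_n\|$. $\mathcal{GB}(H_F)$ is the set of bounded linear operators on $H_F$ with bounded inverse. For $C\in\mathcal{GB}(H_F)$, $\{f_i\}$ in $H$ is a $C$-controlled frame associated to $(a_2,\dots,a_n)$ for $H$ if there are $0<A\le B<\infty$ with $A\|f,a_2,\dots,a_n\|^2\le\sum_i\langle f,f_i|a_2,\dots,a_n\rangle\langle Cf_i,f|a_2,\dots,a_n\rangle\le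 B\|f,a_2,\dots,a_n\|^2$ for all $f\in H_F$; it is a $C$-controlled Parseval frame if this holds with $A=B=1$. Its $C$-controlled frame operator is $S_C:H_F\to H_F$, $S_Cf=\sum_i\langle f,f_i|a_2,\dots,a_n\rangle Cf_i$; it satisfies $A\,I\le S_C\le B\,I$, is positive and invertible, and $S_C^{-1/2}$ denotes the positive square root of $S_C^{-1}$. *)

From mathcomp Require Import all_boot all_order all_algebra.
From mathcomp Require Import fingroup perm complex.
From mathcomp Require Import reals.
Set Implicit Arguments. Unset Strict Implicit. Unset Printing Implicit Defensive.
Import Order.TTheory GRing.Theory Num.Theory.
Local Open Scope ring_scope.

(* Note: the order on R[i] is the partial order of a numClosedFieldType:
   x <= y  iff  y - x is a nonnegative real number. *)

Section NHilbert.
Variable R : realType.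
Local Notation C := R[i].

Section NInner.
Variables (m : nat) (H : lmodType C).
(* ip x y z = < x, y | z_0, ..., z_(m-1) >  (z plays the role of x_2..x_n) *)
Variable ip : H -> H -> ('I_m -> H) -> C.

Definition nip_diag (x : 'I_m.+1 -> H) : C :=
  ip (x ord0) (x ord0) (fun i => x (lift ord0 i)).

Definition lin_dep (x : 'I_m.+1 -> H) : Prop :=
  exists c : 'I_m.+1 -> C, (exists i, c i != 0) /\ \sum_i c i *: x i = 0.

Definition is_n_inner_product : Prop :=
  (forall x, 0 <= nip_diag x) /\
  (forall x, nip_diag x = 0 <-> lin_dep x) /\
  (forall x (s : 'S_m.+1), nip_diag x = nip_diag (fun i => x (s i))) /\
  (forall x y z, ip x y z = (ip y x z)^*) /\
  (forall (a : C) x y z, ip (a *: x) y z = a * ip x y z) /\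
  (forall x x' y z, ip (x + x') y z = ip x y z + ip x' y z).

Definition nnorm (x : H) (z : 'I_m -> H) : C := sqrtC (ip x x z).

Definition n_complete : Prop :=
  forall u : nat -> H,
    (forall z (e : C), 0 < e -> exists N, forall k l, (N <= k)%N -> (N <= l)%N ->
        nnorm (u k - u l) z < e) ->
    exists x, forall z (e : C), 0 < e -> exists N, forall k, (N <= k)%N ->
        nnorm (u k - x) z < e.

(* H is an n-Hilbert space (n = m.+1) *)
Definition is_n_Hilbert : Prop := is_n_inner_product /\ n_complete.
End NInner.

Section Hilbert.
Variables (K : lmodType C) (ipK : K -> K -> C).

Definition normK (x : K) : C := sqrtC (ipK x x).

Definition conv_seq (u : nat -> K) (l : K) : Prop :=
  forall e : C, 0 < e -> exists N, forall k, (N <= k)%N -> normK (u k - l) < e.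

Definition is_Hilbert : Prop :=
  (forall x y, ipK x y = (ipK y x)^*) /\
  (forall (a : C) x y, ipK (a *: x) y = a * ipK x y) /\
  (forall x x' y, ipK (x + x') y = ipK x y + ipK x' y) /\
  (forall x, 0 <= ipK x x) /\
  (forall x, ipK x x = 0 -> x = 0) /\
  (forall u : nat -> K,
         (forall e : C, 0 < e -> exists N, forall k l, (N <= k)%N -> (N <= l)%N ->
             normK (u k - u l) < e) ->
         exists x, conv_seq u x).

Definition series_conv (u : nat -> K) (s : K) : Prop :=
  conv_seq (fun N => \sum_(i < N) u i) s.

Definition cseries_conv (u : nat -> C) (s : C) : Prop :=
  forall e : C, 0 < e -> exists N, forall k, (N <= k)%N ->
    `|\sum_(i < k) u i - s| < e.

Definition is_linear_op (T : K -> K) : Prop :=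
  forall (a : C) x y, T (a *: x + y) = a *: T x + T y.

Definition bounded_op (T : K -> K) : Prop :=
  is_linear_op T /\ exists M : C, 0 <= M /\ forall x, normK (T x) <= M * normK x.

Definition in_GB (T : K -> K) : Prop :=
  bounded_op T /\ exists T' : K -> K,
    [/\ bounded_op T', (forall x, T (T' x) = x) & (forall x, T' (T x) = x)].

Definition controlled_frame (Cop : K -> K) (f : nat -> K) : Prop :=
  exists A B : C, [/\ 0 < A, A <= B &
    forall g, exists s, [/\ cseries_conv (fun i => ipK g (f i) * ipK (Cop (f i)) g) s,
                           A * ipK g g <= s & s <= B * ipK g g]].

Definition controlled_parseval (Cop : K -> K) (f : nat -> K) : Prop :=
  forall g, exists s, [/\ cseries_conv (fun i => ipK g (f i) * ipK (Cop (f i)) g) s,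
                         1 * ipK g g <= s & s <= 1 * ipK g g].

Definition is_frame_operator (Cop : K -> K) (f : nat -> K) (S : K -> K) : Prop :=
  forall g, series_conv (fun i => ipK g (f i) *: Cop (f i)) (S g).

Definition is_pos_sqrt (P Q : K -> K) : Prop :=
  [/\ bounded_op Q, (forall x, 0 <= ipK (Q x) x) & (forall x, Q (Q x) = P x)].
End Hilbert.

(* (K, ipK, j) is (a model of) the Hilbert space H_F associated with
   a = (a_2,...,a_n): j : H -> K is the (linear) canonical map x |-> [x]
   (quotient by L_F, identified with M_F, inside the completion), it
   carries <.,.|a_2,...,a_n> to the inner product of K, and has dense range. *)
Definition is_HF_completion (m : nat) (H : lmodType C)
    (ip : H -> H -> ('I_m -> H) -> C) (a : 'I_m -> H)
    (K : lmodType C) (ipK : K -> K -> C) (j : H -> K) : Prop :=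
  [/\ (forall (c : C) x y, j (c *: x + y) = c *: j x + j y),
      (forall x y, ipK (j x) (j y) = ip x y a) &
      (forall (k : K) (e : C), 0 < e -> exists x, normK ipK (k - j x) < e)].
End NHilbert.

From mathcomp Require Import all_boot all_order all_algebra.
From mathcomp Require Import complex reals ring.
Set Implicit Arguments. Unset Strict Implicit. Unset Printing Implicit Defensive.
Import Order.TTheory GRing.Theory Num.Theory.
Local Open Scope ring_scope.

(* Let Q be the positive square root of S_C^-1.  Once Q commutes with C, the
   terms of the frame series of (Q f_i) at g are those of (f_i) at Q g, so the
   series sums to <S_C Q g, Q g> = <g, g>.
   Q commutes with C because Q^2 = S_C^-1 does: then X = QC - CQ anticommutes
   with Q, hence the positive form (u, v) |-> <QXu, Xv>, for which Q is
   symmetric, takes the value -||QXx||^2 at (Qx, x).  Such forms are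
   nonnegative at (Qx, x), which replaces the functional calculus and follows
   from the iteration B_0 = cQ, B_(n+1) = B_n - B_n^2.  So QX = 0, and CQ = QC
   because Q is onto. *)

Section LinearOp.
Variables (R : realType) (K : lmodType R[i]) (T : K -> K).
Hypothesis hT : is_linear_op T.

Lemma linopD x y : T (x + y) = T x + T y.
Proof. by have := hT 1 x y; rewrite !scale1r. Qed.

Lemma linop0 : T 0 = 0.
Proof. by have := hT (-1) 0 0; rewrite scaler0 add0r scaleN1r addNr. Qed.

Lemma linopZ (a : R[i]) x : T (a *: x) = a *: T x.
Proof. by have := hT a x 0; rewrite !addr0 linop0 addr0. Qed.

Lemma linopN x : T (- x) = - T x.
Proof. by rewrite -scaleN1r linopZ scaleN1r. Qed.

Lemma linopB x y : T (x - y) = T x - T y.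
Proof. by rewrite linopD linopN. Qed.
End LinearOp.

Lemma linop_comp (R : realType) (K : lmodType R[i]) (S T : K -> K) :
  is_linear_op S -> is_linear_op T -> is_linear_op (S \o T).
Proof. by move=> hS hT a x y /=; rewrite hT hS. Qed.

Lemma linopB_fun (R : realType) (K : lmodType R[i]) (S T : K -> K) :
  is_linear_op S -> is_linear_op T -> is_linear_op (fun x => S x - T x).
Proof. by move=> hS hT a x y; rewrite hS hT scalerBr addrACA opprD. Qed.

Definition herm_form (R : realType) (K : lmodType R[i]) (w : K -> K -> R[i]) :=
  [/\ forall x y, w x y = (w y x)^*,
      forall (a : R[i]) x y, w (a *: x) y = a * w x y &
      forall x x' y, w (x + x') y = w x y + w x' y].

Section HermitianForm.
Variables (R : realType) (K : lmodType R[i]) (w : K -> K -> R[i]).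
Hypothesis hw : herm_form w.

Lemma hformC x y : w x y = (w y x)^*. Proof. by case: hw. Qed.
Lemma hformZl (a : R[i]) x y : w (a *: x) y = a * w x y. Proof. by case: hw. Qed.
Lemma hformDl x x' y : w (x + x') y = w x y + w x' y. Proof. by case: hw. Qed.

Lemma hform0l y : w 0 y = 0.
Proof. by rewrite -(scale0r (0 : K)) hformZl mul0r. Qed.

Lemma hformNl x y : w (- x) y = - w x y.
Proof. by rewrite -scaleN1r hformZl mulN1r. Qed.

Lemma hformBl x x' y : w (x - x') y = w x y - w x' y.
Proof. by rewrite hformDl hformNl. Qed.

Lemma hformDr x y y' : w x (y + y') = w x y + w x y'.
Proof. by rewrite hformC hformDl rmorphD /= -!hformC. Qed.

Lemma hformZr (a : R[i]) x y : w x (a *: y) = a^* * w x y.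
Proof. by rewrite hformC hformZl rmorphM /= -hformC. Qed.

Lemma hform0r x : w x 0 = 0.
Proof. by rewrite hformC hform0l rmorph0. Qed.

Lemma hformNr x y : w x (- y) = - w x y.
Proof. by rewrite hformC hformNl rmorphN /= -hformC. Qed.

Lemma hformBr x y y' : w x (y - y') = w x y - w x y'.
Proof. by rewrite hformDr hformNr. Qed.

Lemma hform_suml n (F : 'I_n -> K) y : w (\sum_(i < n) F i) y = \sum_(i < n) w (F i) y.
Proof.
elim: n F => [|n IH] F; first by rewrite !big_ord0 hform0l.
by rewrite !big_ord_recr /= hformDl IH.
Qed.

(* The diagonal values at [x + y] and [x + 'i y] are real, which forces
   [w (T x) y] and [w (T y) x] to be conjugate. *)
Lemma pos_op_herm (T : K -> K) : is_linear_op T -> (forall x, 0 <= w (T x) x) ->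
  forall x y, w (T x) y = w x (T y).
Proof.
move=> hT Tpos x y.
have i2 : 'i * 'i = -1 :> R[i] by rewrite -expr2 sqrCi.
have realT u : (w (T u) u)^* = w (T u) u by rewrite geC0_conj.
set a := w (T x) y; set b := w (T y) x.
have e1 : a + b = w (T (x + y)) (x + y) - w (T x) x - w (T y) y.
  by rewrite (linopD hT) !hformDl !hformDr -/a -/b; ring.
have e2 : 'i * (b - a) = w (T (x + 'i *: y)) (x + 'i *: y) - w (T x) x - w (T y) y.
  rewrite (linopD hT) (linopZ hT) !hformDl !hformDr !hformZl !hformZr -/a -/b conjCi.
  by ring: i2.
have sum_real : a^* + b^* = a + b by rewrite -rmorphD e1 !rmorphB /= !realT.
have diff_real : - 'i * (b^* - a^*) = 'i * (b - a).
  by rewrite -conjCi -rmorphB -rmorphM e2 !rmorphB /= !realT.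
have -> : a = b^*.
  apply: (mulfI (_ : (2 : R[i]) != 0)); first by rewrite pnatr_eq0.
  transitivity ((a + b) + 'i * ('i * (b - a))); first by ring: i2.
  by rewrite -diff_real -sum_real; ring: i2.
by rewrite [w x (T y)]hformC.
Qed.
End HermitianForm.

Section InnerProduct.
Variables (R : realType) (K : lmodType R[i]) (ip : K -> K -> R[i]).
Hypothesis hip : herm_form ip.
Hypothesis ip_ge0 : forall x, 0 <= ip x x.
Hypothesis ip_eq0 : forall x, ip x x = 0 -> x = 0.
Local Notation nK := (normK ip).

Lemma normK_ge0 x : 0 <= nK x.
Proof. by rewrite /normK sqrtC_ge0. Qed.

Lemma normK_sqr x : nK x ^+ 2 = ip x x.
Proof. by rewrite /normK sqrtCK. Qed.

Lemma normKN x : nK (- x) = nK x.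
Proof. by rewrite /normK (hformNl hip) (hformNr hip) opprK. Qed.

Lemma ler_normK_sqr x r : 0 <= r -> ip x x <= r ^+ 2 -> nK x <= r.
Proof.
by move=> r0; rewrite -normK_sqr ler_pXn2r // nnegrE normK_ge0.
Qed.

(* Expand [0 <= ip (x - l y) (x - l y)] at [l = ip x y / ip y y]. *)
Lemma cauchy_schwarz x y : `|ip x y| <= nK x * nK y.
Proof.
have [->|yn0] := eqVneq y 0; first by rewrite (hform0r hip) normr0 mulr_ge0 ?normK_ge0.
set v := ip y y; set a := ip x y.
have v0 : 0 < v by rewrite lt_def ip_ge0 andbT; apply: contra_neq yn0 => /ip_eq0.
have yx : ip y x = a^* by rewrite (hformC hip).
have := ip_ge0 (x - (a / v) *: y).
rewrite (hformBl hip) !(hformBr hip) !(hformZl hip) !(hformZr hip) -/a -/v yx.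
rewrite rmorphM /= fmorphV /= (geC0_conj (ltW v0)).
have -> : ip x x - a^* / v * a - (a / v * a^* - a / v * (a^* / v * v))
          = ip x x - a * a^* / v by field; exact: lt0r_neq0.
rewrite subr_ge0 ler_pdivrMr // -normCK => h.
by rewrite -(@ler_pXn2r _ 2) ?nnegrE ?mulr_ge0 ?normK_ge0 // exprMn !normK_sqr.
Qed.

Lemma normKD x y : nK (x + y) <= nK x + nK y.
Proof.
apply: ler_normK_sqr; first by rewrite addr_ge0 ?normK_ge0.
rewrite -(ger0_norm (ip_ge0 _)) (hformDl hip) !(hformDr hip).
apply: le_trans (ler_normD _ _) _.
apply: le_trans (lerD (ler_normD _ _) (ler_normD _ _)) _.
rewrite !(ger0_norm (ip_ge0 _)) -!normK_sqr.
have -> : (nK x + nK y) ^+ 2 = nK x ^+ 2 + nK x * nK y + (nK y * nK x + nK y ^+ 2).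
  by ring.
by rewrite lerD ?lerD2l ?lerD2r ?cauchy_schwarz.
Qed.

Lemma bounded_op_comp S T : bounded_op ip S -> bounded_op ip T -> bounded_op ip (S \o T).
Proof.
move=> [Sl [MS [MS0 Sb]]] [Tl [MT [MT0 Tb]]]; split; first exact: linop_comp.
exists (MS * MT); split=> [|x /=]; first exact: mulr_ge0.
by apply: le_trans (Sb _) _; rewrite -mulrA ler_wpM2l.
Qed.

Lemma bounded_opB S T :
  bounded_op ip S -> bounded_op ip T -> bounded_op ip (fun x => S x - T x).
Proof.
move=> [Sl [MS [MS0 Sb]]] [Tl [MT [MT0 Tb]]]; split; first exact: linopB_fun.
exists (MS + MT); split=> [|x]; first exact: addr_ge0.
by apply: le_trans (normKD _ _) _; rewrite normKN mulrDl lerD.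
Qed.

Lemma frame_operator_cseries (Cop : K -> K) (f : nat -> K) (S : K -> K) h :
  is_frame_operator ip Cop f S ->
  cseries_conv (fun i => ip h (f i) * ip (Cop (f i)) h) (ip (S h) h).
Proof.
move=> hS e e0.
have nh0 : 0 < nK h + 1 by rewrite ltr_wpDl ?normK_ge0.
have [N hN] := hS h (e / (nK h + 1)) (divr_gt0 e0 nh0).
exists N => k /hN; set s := \sum_(i < k) _ => hs.
have -> : \sum_(i < k) ip h (f i) * ip (Cop (f i)) h = ip s h.
  by rewrite (hform_suml hip); apply: eq_bigr => i _; rewrite (hformZl hip).
rewrite -(hformBl hip); apply: le_lt_trans (cauchy_schwarz _ _) _.
apply: (@le_lt_trans _ _ (nK (s - S h) * (nK h + 1))).
  by rewrite ler_wpM2l ?normK_ge0 ?lerDl.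
by rewrite -ltr_pdivlMr.
Qed.
End InnerProduct.

Lemma eq_cseries_conv (R : realType) (u v : nat -> R[i]) s :
  cseries_conv u s -> u =1 v -> cseries_conv v s.
Proof.
move=> hu uv e /hu[N hN]; exists N => k /hN.
by under eq_bigr do rewrite uv.
Qed.

Lemma exists_nat_gtC (R : realType) (t : R[i]) : 0 <= t -> exists N : nat, t < N%:R.
Proof.
move=> t0; have tr : t \is Num.real by rewrite ger0_real.
exists (Num.Def.archi_bound (complex.Re t)).
rewrite -(RRe_real tr) -[X in _ < X](rmorph_nat (real_complex R)) ltcR.
by rewrite archi_boundP //; move: t0; rewrite lecE => /andP[].
Qed.

Fixpoint subsqr_iter (R : realType) (K : lmodType R[i]) (T : K -> K) (n : nat) : K -> K :=
  if n is n'.+1 then fun u => subsqr_iter T n' u - subsqr_iter T n' (subsqr_iter T n' u)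
  else T.

(* For [0 <= T <= 1] the iterates [B_(n+1) = B_n - B_n^2] stay between [0] and [1]
   and [T = \sum_(k < n) B_k^2 + B_n], so [B_k x] becomes arbitrarily small. *)
Section SubsqrIter.
Variables (R : realType) (K : lmodType R[i]) (ip : K -> K -> R[i]).
Hypothesis hip : herm_form ip.
Hypothesis ip_ge0 : forall x, 0 <= ip x x.
Local Notation nK := (normK ip).
Variable T : K -> K.
Hypothesis Tl : is_linear_op T.
Hypothesis Tpos : forall x, 0 <= ip (T x) x.
Hypothesis Tle1 : forall x, ip (T x) x <= ip x x.
Local Notation B := (subsqr_iter T).

Lemma subsqr_iter_linear n : is_linear_op (B n).
Proof.
elim: n => [//|n IH] a u v /=.
by rewrite IH !(linopD IH) !(linopZ IH) scalerBr opprD addrACA.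
Qed.

Section SymmetricForm.
Variable w : K -> K -> R[i].
Hypothesis hw : herm_form w.
Hypothesis wT : forall u v, w (T u) v = w u (T v).

Lemma subsqr_iter_sym n u v : w (B n u) v = w u (B n v).
Proof.
elim: n u v => [//|n IH] u v /=.
by rewrite (hformBl hw) (hformBr hw) !IH.
Qed.

Lemma subsqr_iter_telescope x n :
  w (T x) x = \sum_(k < n) w (B k x) (B k x) + w (B n x) x.
Proof.
elim: n => [|n IH]; first by rewrite big_ord0 add0r.
by rewrite big_ord_recr /= IH (hformBl hw) [w (B n (B n x)) x]subsqr_iter_sym; ring.
Qed.
End SymmetricForm.

Let T_herm := pos_op_herm hip Tl Tpos.

Lemma subsqr_iter_bounds n u : 0 <= ip (B n u) u <= ip u u.
Proof.
elim: n u => [|n IH] u /=; first by rewrite Tpos Tle1.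
have Bsym := subsqr_iter_sym hip T_herm n.
have Bl := subsqr_iter_linear n.
have /andP[y0 y1] := IH (B n u); have /andP[_ u1] := IH u.
have /andP[uy0 _] := IH (u - B n u).
set y := B n u in y0 y1 u1 uy0 *; rewrite !(hformBl hip); apply/andP; split.
  have -> : ip y u - ip (B n y) u = (ip y y - ip (B n y) y) + ip (B n (u - y)) (u - y).
    by rewrite (linopB Bl) (hformBl hip) !(hformBr hip) Bsym -/y; ring.
  by rewrite addr_ge0 ?subr_ge0.
have -> : ip y u - ip (B n y) u = ip u u - ((ip u u - ip y u) + ip y y).
  by rewrite Bsym -/y; ring.
by rewrite gerBl addr_ge0 ?subr_ge0.
Qed.

Lemma subsqr_iter_small x eps : 0 < eps -> exists k, nK (B k x) < eps.
Proof.
move=> eps0; have eps2 : 0 < eps ^+ 2 by rewrite exprn_gt0.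
have [N] := exists_nat_gtC (divr_ge0 (ip_ge0 x) (ltW eps2)).
rewrite ltr_pdivrMr // => hN.
have /existsP[k hk] : [exists k : 'I_N, ip (B k x) (B k x) < eps ^+ 2].
  apply: contraT => /existsPn hall.
  have sum_ge : N%:R * eps ^+ 2 <= \sum_(k < N) ip (B k x) (B k x).
    rewrite mulr_natl -[N in _ *+ N]card_ord -sumr_const; apply: ler_sum => k _.
    by rewrite real_leNgt ?hall ?ger0_real ?ip_ge0 ?ltW.
  have sum_le : \sum_(k < N) ip (B k x) (B k x) <= ip x x.
    apply: le_trans (Tle1 x); rewrite (subsqr_iter_telescope hip T_herm x N) lerDl.
    by case/andP: (subsqr_iter_bounds N x).
  by have := lt_le_trans hN (le_trans sum_ge sum_le); rewrite ltxx.
exists k; rewrite -(@ltr_pXn2r _ 2) ?nnegrE ?normK_ge0 ?ltW //.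
by rewrite normK_sqr.
Qed.

Variable w : K -> K -> R[i].
Hypothesis hw : herm_form w.
Hypothesis wpsd : forall u, 0 <= w u u.
Hypothesis wT : forall u v, w (T u) v = w u (T v).
Hypothesis wbounded : forall y, exists2 D, 0 <= D & forall u, `|w u y| <= D * nK u.

(* If [w (T x) x = - q < 0], the telescoping identity gives
   [|w (B k x) x| >= q] for every [k], contradicting the smallness of [B k x]. *)
Lemma contraction_form_ge0 x : 0 <= w (T x) x.
Proof.
have real_wTx : w (T x) x \is Num.real by rewrite CrealE -(hformC hw) wT.
rewrite real_leNgt ?real0 //; apply/negP; rewrite -oppr_gt0; set q := - _ => q0.
have [D D0 hD] := wbounded x.
have D1 : 0 < D + 1 by rewrite ltr_wpDl.
have [k hk] := subsqr_iter_small x (divr_gt0 q0 D1).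
have := subsqr_iter_telescope hw wT x k.
set s := \sum_(j < k) _ => tele.
have s0 : 0 <= s by apply: sumr_ge0 => j _; exact: wpsd.
have q_le : q <= `|w (B k x) x|.
  have -> : w (B k x) x = - (q + s) by rewrite /q tele; ring.
  by rewrite normrN ger0_norm ?lerDl ?addr_ge0 ?(ltW q0).
have q_gt : `|w (B k x) x| < q.
  apply: le_lt_trans (hD _) _; apply: (@le_lt_trans _ _ ((D + 1) * nK (B k x))).
    by rewrite ler_wpM2r ?normK_ge0 ?lerDl.
  by rewrite mulrC -ltr_pdivlMr.
by have := le_lt_trans q_le q_gt; rewrite ltxx.
Qed.
End SubsqrIter.

Section PositiveOperator.
Variables (R : realType) (K : lmodType R[i]) (ip : K -> K -> R[i]).
Hypothesis hip : herm_form ip.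
Hypothesis ip_ge0 : forall x, 0 <= ip x x.
Hypothesis ip_eq0 : forall x, ip x x = 0 -> x = 0.
Local Notation nK := (normK ip).
Variable Q : K -> K.
Hypothesis hQ : bounded_op ip Q.
Hypothesis Qpos : forall x, 0 <= ip (Q x) x.

(* Rescaled by [c = (M + 1)^-1], [Q] becomes a contraction. *)
Lemma pos_op_form_ge0 (w : K -> K -> R[i]) : herm_form w ->
  (forall u, 0 <= w u u) -> (forall u v, w (Q u) v = w u (Q v)) ->
  (forall y, exists2 D, 0 <= D & forall u, `|w u y| <= D * nK u) ->
  forall x, 0 <= w (Q x) x.
Proof.
move=> hw wpsd wQ wbounded x.
have [Ql [M [M0 Qb]]] := hQ.
have c0 : 0 < (M + 1)^-1 by rewrite invr_gt0 ltr_wpDl.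
pose T u := (M + 1)^-1 *: Q u.
have Tl : is_linear_op T by move=> a u v; rewrite /T Ql scalerDr !scalerA mulrC.
have Tpos u : 0 <= ip (T u) u by rewrite (hformZl hip) mulr_ge0 ?Qpos ?(ltW c0).
have Tle1 u : ip (T u) u <= ip u u.
  rewrite (hformZl hip) ler_pdivrMl ?ltr_wpDl //.
  have QM : ip (Q u) u <= M * ip u u.
    rewrite -(ger0_norm (Qpos u)); apply: le_trans (cauchy_schwarz hip ip_ge0 ip_eq0 _ _) _.
    by rewrite -normK_sqr expr2 mulrA ler_wpM2r ?normK_ge0.
  by apply: le_trans QM _; rewrite ler_wpM2r ?lerDl.
have wT u v : w (T u) v = w u (T v).
  by rewrite /T (hformZl hw) (hformZr hw) geC0_conj ?wQ ?(ltW c0).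
have := contraction_form_ge0 hip ip_ge0 Tl Tpos Tle1 hw wpsd wT wbounded x.
by rewrite /T (hformZl hw) pmulr_rge0.
Qed.

(* [w u v = ip (Q (X u)) (X v)] is a positive form for which [Q] is
   symmetric, while [w (Q x) x = - ip (Q (X x)) (Q (X x))]. *)
Lemma anticomm_pos_op_eq0 X : bounded_op ip X ->
  (forall u, X (Q u) = - Q (X u)) -> forall u, Q (X u) = 0.
Proof.
move=> hX XQ x.
have [[Ql _] [Xl _]] := (hQ, hX).
have Q_herm := pos_op_herm hip Ql Qpos.
pose w u v := ip (Q (X u)) (X v).
have hw : herm_form w.
  split=> [u v|a u v|u u' v]; rewrite /w.
  - by rewrite Q_herm (hformC hip).
  - by rewrite (linopZ Xl) (linopZ Ql) (hformZl hip).
  - by rewrite (linopD Xl) (linopD Ql) (hformDl hip).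
have wQ u v : w (Q u) v = - ip (Q (X u)) (Q (X v)).
  by rewrite /w XQ (linopN Ql) (hformNl hip) Q_herm.
have wQ_sym u v : w (Q u) v = w u (Q v) by rewrite wQ /w XQ (hformNr hip).
have wbounded y : exists2 D, 0 <= D & forall u, `|w u y| <= D * nK u.
  have [_ [M [M0 QXb]]] := bounded_op_comp hQ hX.
  exists (M * nK (X y)) => [|u]; first by rewrite mulr_ge0 ?normK_ge0.
  apply: le_trans (cauchy_schwarz hip ip_ge0 ip_eq0 _ _) _.
  by rewrite mulrAC ler_wpM2r ?normK_ge0 ?(QXb u).
have := pos_op_form_ge0 hw (fun u => Qpos (X u)) wQ_sym wbounded x.
rewrite wQ oppr_ge0 => le0; apply: ip_eq0; apply/eqP.
by rewrite eq_le le0 ip_ge0.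
Qed.

Lemma pos_op_commute Cop : bounded_op ip Cop -> (forall x, exists v, x = Q v) ->
  (forall x, Q (Q (Cop x)) = Cop (Q (Q x))) -> forall x, Cop (Q x) = Q (Cop x).
Proof.
move=> hC Qsurj hsq x.
have Ql := hQ.1.
pose X u := Q (Cop u) - Cop (Q u).
have hX := bounded_opB hip ip_ge0 ip_eq0 (bounded_op_comp hQ hC) (bounded_op_comp hC hQ).
have XQ u : X (Q u) = - Q (X u) by rewrite /X (linopB Ql) hsq opprB.
have [v ->] := Qsurj x.
by rewrite -hsq; apply/eqP; rewrite -subr_eq0 -(linopB Ql) (anticomm_pos_op_eq0 hX XQ).
Qed.
End PositiveOperator.

Unset Implicit Arguments.

Theorem theorem3p7 (R : realType) (m : nat) (Hm : (1 <= m)%N)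
  (H : lmodType R[i]) (ip : H -> H -> ('I_m -> H) -> R[i])
  (hH : is_n_Hilbert ip)
  (a : 'I_m -> H)
  (K : lmodType R[i]) (ipK : K -> K -> R[i]) (hK : is_Hilbert ipK)
  (j : H -> K) (hj : is_HF_completion ip a ipK j)
  (Cop : K -> K) (hC : in_GB ipK Cop)
  (f : nat -> H) (hf : controlled_frame ipK Cop (fun i => j (f i)))
  (S : K -> K) (hS : is_frame_operator ipK Cop (fun i => j (f i)) S)
  (Sinv : K -> K) (hSinv1 : forall x, S (Sinv x) = x) (hSinv2 : forall x, Sinv (S x) = x)
  (hcomm : forall x, Sinv (Cop x) = Cop (Sinv x))
  (Shalf : K -> K) (hhalf : is_pos_sqrt ipK Sinv Shalf) :
  controlled_parseval ipK Cop (fun i => Shalf (j (f i))).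
Proof.
have [ipC [ipZ [ipD [ip_ge0 [ip_eq0 _]]]]] := hK.
have hip : herm_form ipK by split.
have [hQ Qpos Qsq] := hhalf.
have Q_herm := pos_op_herm hip hQ.1 Qpos.
have CQ : forall u, Cop (Shalf u) = Shalf (Cop u).
  apply: (pos_op_commute hip ip_ge0 ip_eq0 hQ Qpos hC.1) => x.
  - by exists (Shalf (S x)); rewrite Qsq hSinv2.
  - by rewrite !Qsq hcomm.
have QS y : Shalf (S y) = S (Shalf y) by rewrite -{2}[y]hSinv2 -Qsq Qsq hSinv1.
move=> g; exists (ipK g g); rewrite !mul1r; split=> //.
have -> : ipK g g = ipK (S (Shalf g)) (Shalf g) by rewrite -Q_herm QS Qsq hSinv1.
apply: eq_cseries_conv (frame_operator_cseries hip ip_ge0 ip_eq0 (Shalf g) hS) _ => i.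
by rewrite -!Q_herm CQ.
Qed.
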